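(* Let $\mathcal C$ be a set of cycles and $m\ge1$. There exists a nonsingular $m$-stage FSR $f$ with $\Omega(f)=\mathcal C$ if and only if (i) $\sum_{c\in\mathcal C}\mathrm{per}(c)=2^m$, and (ii) the map $v\mapsto \mathrm{lbit}_m(v)$ is injective on $\bigcup_{c\in\mathcal C}\Omega_{m+1}(c)$.
   Context: An $m$-stage FSR with feedback logic $f_1:\{0,1\}^m\to\{0,1\}$ has state transformation $F(x_0,\dots,x_{m-1})=(x_1,\dots,x_{m-1},f_1(x_0,\dots,x_{m-1}))$ and generates the binary sequences $s:\mathbb Z\to\{0,1\}$ with $s(t+m)=f_1(s(t),\dots,s(t+m-1))$ for all $t$; it is nonsingular if $F$ is bijective. A periodic sequence $s$ of least period $p$ determines the cycle $[s(0),\dots,s(p-1)]$ (shifts of $s$ give the same cycle), with $\mathrm{per}(c)=p$. The cycle structure $\Omega(f)$ is the set of cycles of the sequences generated by $f$. For a cycle $c$ given by $s$ with period $p$, $\Omega_k(c)=\{(s(i),s((i+1)\bmod p),\dots,s((i+k-1)\bmod p)):0\le i<p\}\subseteq\{0,1\}^k$. For $v=(a_1,\dots,a_{m+1})$, $\mathrm{lbit}_m(v)=(a_2,\dots,a_{m+1})$ (last $m$ coordinates). *)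

From mathcomp Require Import all_boot all_order all_algebra.
Set Implicit Arguments. Unset Strict Implicit. Unset Printing Implicit Defensive.
Import GRing.Theory Num.Theory.

Definition window (m : nat) (s : int -> bool) (t : int) : m.-tuple bool :=
  [tuple s (t + Posz i)%R | i < m].

(* State transformation F(x_0..x_{m-1}) = (x_1, .., x_{m-1}, f1(x_0..x_{m-1})). *)
Definition fsr_step (m : nat) (f : m.-tuple bool -> bool) (x : m.-tuple bool)
  : m.-tuple bool :=
  [tuple nth (f x) (tval x) i.+1 | i < m].

Definition nonsingular (m : nat) (f : m.-tuple bool -> bool) : Prop :=
  bijective (fsr_step f).

Definition generates (m : nat) (f : m.-tuple bool -> bool) (s : int -> bool) : Prop :=
  forall t : int, s (t + Posz m)%R = f (window m s t).

Definition is_period (s : int -> bool) (p : nat) : Prop :=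
  forall t : int, s (t + Posz p)%R = s t.

Definition least_period (s : int -> bool) (p : nat) : Prop :=
  (0 < p)%N /\ is_period s p /\ forall q : nat, (0 < q < p)%N -> ~ is_period s q.

(* A cycle is represented by a word [s(0),...,s(p-1)] (p the least period),
   i.e. a nonempty primitive word, words being identified up to rotation. *)
Definition cycle_word (s : int -> bool) (p : nat) : seq bool :=
  [seq s (Posz i) | i <- iota 0 p].

Definition is_cycle (w : seq bool) : bool :=
  (0 < size w)%N && all (fun q => rot q w != w) (iota 1 (size w).-1).

Definition same_cycle (u v : seq bool) : bool :=
  has (fun i => rot i u == v) (iota 0 (size u)).

Definition per (c : seq bool) : nat := size c.

Definition cycle_set (C : seq (seq bool)) : Prop :=
  all is_cycle C /\
  forall i j, (i < size C)%N -> (j < size C)%N ->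
    same_cycle (nth [::] C i) (nth [::] C j) -> i = j.

Definition in_Omega (m : nat) (f : m.-tuple bool -> bool) (c : seq bool) : Prop :=
  exists (s : int -> bool) (p : nat),
    generates f s /\ least_period s p /\ same_cycle (cycle_word s p) c.

Definition Omega_eq (m : nat) (f : m.-tuple bool -> bool) (C : seq (seq bool)) : Prop :=
  forall c, is_cycle c -> (in_Omega f c <-> has (same_cycle c) C).

Definition Omega_k (k : nat) (c : seq bool) : seq (seq bool) :=
  [seq [seq nth false c ((i + j) %% size c) | j <- iota 0 k] | i <- iota 0 (size c)].

Definition lbit (m : nat) (v : seq bool) : seq bool := drop (size v - m) v.

From mathcomp Require Import all_boot all_order all_algebra.
From mathcomp Require Import zify.
From Stdlib Require Import Classical.
Set Implicit Arguments. Unset Strict Implicit. Unset Printing Implicit Defensive.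
Import GRing.Theory Num.Theory.

(* A cycle c is read as the periodic sequence t |-> c[t mod per c], and a state of the
   register as a window of m consecutive terms. The central property is that the
   m-windows of the cycles in C determine the cycles: two of them that share a window
   coincide after alignment. Then the m-windows of the cycles in C at positions
   0 .. per c - 1 are pairwise distinct, so they exhaust the 2^m states exactly when
   the periods sum to 2^m.
   If f is nonsingular with Omega(f) = C, determination comes from running f forward,
   every state lies on a cycle of the permutation F, and injectivity of F recovers an
   (m+1)-window from its last m bits. Conversely, injectivity of lbit lets the windows
   be run backward, hence determine the cycles; the feedback "x is followed by 1 iff
   x 1 is an (m+1)-window of some cycle in C" then generates exactly the cycles in C,
   and F is injective because windows determine their predecessors. *)

Local Open Scope ring_scope.

Section Periodic.

Implicit Types (s : int -> bool) (p q : nat) (t : int).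

Lemma periodMz s p : is_period s p -> forall (z : int) t, s (t + z * p%:Z) = s t.
Proof.
move=> sp; have natM n t : s (t + (n * p)%N%:Z) = s t.
  by elim: n t => [|n IH] t; rewrite ?mul0n ?addr0 // mulSnr PoszD addrA sp.
case=> n t; first by rewrite -PoszM natM.
by rewrite -[LHS](natM n.+1) NegzE PoszM mulNr addrNK.
Qed.

Lemma periodM s p q : is_period s p -> is_period s (p * q).
Proof. by move=> sp t; rewrite PoszM mulrC (periodMz sp). Qed.

Lemma period_modz s p t : is_period s p -> s t = s (t %% p%:Z)%Z.
Proof. by move=> sp; rewrite {1}(divz_eq t p) addrC periodMz. Qed.

Lemma period_shift s p a : is_period s p -> is_period (fun t => s (a + t)) p.
Proof. by move=> sp t; rewrite addrA sp. Qed.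

Lemma eq_periodic (u v : int -> bool) p : (0 < p)%N -> is_period u p -> is_period v p ->
  (forall n, (n < p)%N -> u n%:Z = v n%:Z) -> u =1 v.
Proof.
move=> p0 up vp uv t; rewrite (period_modz t up) (period_modz t vp).
have p0' : p%:Z != 0 by rewrite eqz_nat -lt0n.
rewrite -(gez0_abs (modz_ge0 t p0')) uv // -ltz_nat gez0_abs ?modz_ge0 //.
by rewrite ltz_pmod.
Qed.

Section Agree.
Variables (s1 s2 : int -> bool) (p1 p2 : nat) (a b : int).
Hypotheses (p1_gt0 : (0 < p1)%N) (p2_gt0 : (0 < p2)%N).
Hypotheses (s1p : is_period s1 p1) (s2p : is_period s2 p2).

Let agree_periodic : (forall n, (n < p1 * p2)%N -> s1 (a + n%:Z) = s2 (b + n%:Z)) ->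
  forall t, s1 (a + t) = s2 (b + t).
Proof.
apply: (eq_periodic (u := fun t => s1 (a + t)) (v := fun t => s2 (b + t))).
- by rewrite muln_gt0 p1_gt0.
- exact/period_shift/periodM.
- by rewrite mulnC; exact/period_shift/periodM.
Qed.

Lemma periodic_agree_fwd : (forall n : nat, s1 (a + n%:Z) = s2 (b + n%:Z)) ->
  forall t, s1 (a + t) = s2 (b + t).
Proof. by move=> eq12; apply: agree_periodic => n _. Qed.

Lemma periodic_agree_bwd : (forall n : nat, s1 (a - n%:Z) = s2 (b - n%:Z)) ->
  forall t, s1 (a + t) = s2 (b + t).
Proof.
move=> eq12; apply: agree_periodic => n n_lt.
have P1 : is_period s1 (p1 * p2) by exact: periodM.
have P2 : is_period s2 (p1 * p2) by rewrite mulnC; exact: periodM.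
have shiftE x : x + n%:Z = x - (p1 * p2 - n)%N%:Z + (p1 * p2)%N%:Z by lia.
by rewrite !shiftE P1 P2 eq12.
Qed.

End Agree.

Lemma least_period_uniq s p q : least_period s p -> least_period s q -> p = q.
Proof.
move=> [p0 [sp minp]] [q0 [sq minq]].
by case: (ltngtP p q) => // [ltpq | ltqp]; [case: (minq p) | case: (minp q)]; rewrite ?p0 ?q0.
Qed.

Lemma exists_least_period s p : (0 < p)%N -> is_period s p -> exists q, least_period s q.
Proof.
elim/ltn_ind: p => p IH p0 sp.
case: (classic (exists q, (0 < q < p)%N /\ is_period s q)) => [[q [/andP[q0 qp] sq]]|].
  exact: (IH q).
by move=> none; exists p; do 2!split=> //; move=> q qp sq; apply: none; exists q.
Qed.

Section Shift.
Variables (s s' : int -> bool) (d : int).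
Hypothesis s'E : forall t, s' t = s (t + d).

Lemma period_shiftE q : is_period s' q <-> is_period s q.
Proof.
split=> sq t; rewrite ?s'E.
  by have := sq (t - d); rewrite !s'E addrAC subrK.
by rewrite addrAC sq.
Qed.

Lemma least_period_shift p : least_period s p -> least_period s' p.
Proof.
case=> p0 [sp minp]; do 2!split=> //; first exact/period_shiftE.
by move=> q qp /period_shiftE; exact: minp.
Qed.

End Shift.

End Periodic.

Lemma nth_rot (T : Type) (x0 : T) (s : seq T) i j : (i <= size s)%N -> (j < size s)%N ->
  nth x0 (rot i s) j = nth x0 s ((j + i) %% size s).
Proof.
move=> le_i lt_j; rewrite /rot nth_cat size_drop.
case: ltnP => lt_ji.
  by rewrite nth_drop modn_small; [rewrite addnC | lia].
have -> : (j + i = j - (size s - i) + size s)%N by lia.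
by rewrite nth_take ?modnDr ?modn_small //; lia.
Qed.

Section CycleSeq.

Implicit Types (c u v : seq bool) (s : int -> bool) (a b t : int).

Definition cycle_seq c t : bool := nth false c (absz (t %% (size c)%:Z)%Z).

Lemma absz_modz t n : (0 < n)%N -> (absz (t %% n%:Z)%Z)%:Z = (t %% n%:Z)%Z.
Proof. by move=> n0; rewrite gez0_abs // modz_ge0 // eqz_nat -lt0n. Qed.

Lemma absz_modz_lt t n : (0 < n)%N -> (absz (t %% n%:Z)%Z < n)%N.
Proof. by move=> n0; rewrite -ltz_nat absz_modz // ltz_pmod. Qed.

Lemma cycle_seq_mod c t1 t2 : (t1 = t2 %[mod (size c)%:Z])%Z -> cycle_seq c t1 = cycle_seq c t2.
Proof. by rewrite /cycle_seq => ->. Qed.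

Lemma cycle_seq_period c : is_period (cycle_seq c) (size c).
Proof. by move=> t; apply: cycle_seq_mod; rewrite modzDr. Qed.

Lemma cycle_seq_nat c n : cycle_seq c n%:Z = nth false c (n %% size c).
Proof. by rewrite /cycle_seq modz_nat. Qed.

Lemma cycle_seq_small c i : (i < size c)%N -> cycle_seq c i%:Z = nth false c i.
Proof. by move=> lt_i; rewrite cycle_seq_nat modn_small. Qed.

Lemma cycle_seq_rot c i t : (i <= size c)%N -> cycle_seq (rot i c) t = cycle_seq c (t + i%:Z).
Proof.
move=> le_i; case: (posnP (size c)) => [/size0nil-> | c0]; first by rewrite /cycle_seq !nth_nil.
rewrite /cycle_seq size_rot nth_rot ?absz_modz_lt //; congr nth; apply/eqP.
by rewrite -eqz_nat -modz_nat PoszD !absz_modz // modzDml.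
Qed.

Lemma cycle_word_seq c : cycle_word (cycle_seq c) (size c) = c.
Proof.
apply: (@eq_from_nth _ false) => [|j]; rewrite size_map size_iota // => lt_j.
by rewrite (nth_map 0%N) ?size_iota // nth_iota // cycle_seq_small.
Qed.

Lemma cycle_seq_word s p : (0 < p)%N -> is_period s p -> s =1 cycle_seq (cycle_word s p).
Proof.
move=> p0 sp t; rewrite /cycle_seq size_map size_iota.
rewrite (nth_map 0%N) ?size_iota ?absz_modz_lt // nth_iota ?absz_modz_lt //.
by rewrite add0n absz_modz // -period_modz.
Qed.

Lemma least_period_cycle_seq c : is_cycle c -> least_period (cycle_seq c) (size c).
Proof.
case/andP=> c0 /allP not_rot; do 2!split=> //; first exact: cycle_seq_period.
move=> q /andP[q0 lt_q] cq.
have /negP[] : rot q c != c by apply: not_rot; rewrite mem_iota; lia.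
apply/eqP/(@eq_from_nth _ false) => [|j]; rewrite size_rot // => lt_j.
by rewrite -cycle_seq_small ?size_rot // (cycle_seq_rot _ (ltnW lt_q)) cq cycle_seq_small.
Qed.

Lemma is_cycle_word s p : least_period s p -> is_cycle (cycle_word s p).
Proof.
case=> p0 [sp minp]; rewrite /is_cycle size_map size_iota p0.
apply/allP => q; rewrite mem_iota => q_range; apply/negP => /eqP rotq.
apply: (minp q); first lia.
move=> t; rewrite !(cycle_seq_word p0 sp) -cycle_seq_rot ?rotq //.
by rewrite size_map size_iota; lia.
Qed.

Lemma same_cycle_refl u : (0 < size u)%N -> same_cycle u u.
Proof. by move=> u0; apply/hasP; exists 0%N; rewrite ?mem_iota ?rot0. Qed.

Lemma same_cycle_shift u v : is_cycle u -> is_cycle v ->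
  same_cycle u v <-> exists d : int, forall t, cycle_seq v t = cycle_seq u (t + d).
Proof.
move=> cu cv; split.
  case/hasP=> i; rewrite mem_iota => /andP[_ lt_i] /eqP<-.
  by exists i%:Z => t; rewrite cycle_seq_rot // ltnW.
case=> d vE; have u0 : (0 < size u)%N by case/andP: cu.
have sizeE : size v = size u.
  apply: least_period_uniq (least_period_cycle_seq cv) _.
  by apply: (least_period_shift vE); exact: least_period_cycle_seq.
apply/hasP; exists (absz (d %% (size u)%:Z)%Z); first by rewrite mem_iota absz_modz_lt.
apply/eqP/(@eq_from_nth _ false) => [|j]; rewrite size_rot // => lt_j.
rewrite -cycle_seq_small ?size_rot // cycle_seq_rot; last exact/ltnW/absz_modz_lt.
by rewrite -cycle_seq_small ?sizeE // vE; apply: cycle_seq_mod; rewrite absz_modz // modzDmr.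
Qed.

Lemma same_cycle_agree u v a b : is_cycle u -> is_cycle v ->
  (forall t, cycle_seq u (a + t) = cycle_seq v (b + t)) -> same_cycle u v.
Proof.
move=> cu cv uv; apply/same_cycle_shift => //; exists (a - b) => t.
by have := uv (t - b); rewrite [b + _]addrC subrK => <-; congr cycle_seq; lia.
Qed.

Lemma cycle_seq_shift_inj c i j : is_cycle c -> (i < size c)%N -> (j < size c)%N ->
  (forall t, cycle_seq c (i%:Z + t) = cycle_seq c (j%:Z + t)) -> i = j.
Proof.
move=> cc; wlog le_ij : i j / (i <= j)%N.
  move=> W lt_i lt_j eqij; case/orP: (leq_total i j) => le; first exact: W.
  by apply/esym/W => // t; rewrite eqij.
move=> lt_i lt_j eqij; apply/eqP; rewrite eqn_leq le_ij leqNgt; apply/negP => lt_ij.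
have [_ [_ minp]] := least_period_cycle_seq cc.
apply: (minp (j - i)%N); first lia.
move=> t; have := eqij (t - i%:Z); rewrite addrC subrK => ->.
congr cycle_seq; lia.
Qed.

End CycleSeq.

Lemma val_mktuple_nat (T : Type) m (F : nat -> T) :
  val [tuple F i | i < m] = [seq F i | i <- iota 0 m].
Proof. by rewrite /= -val_enum_ord -map_comp. Qed.

Section Windows.

Implicit Types (s : int -> bool) (d t : int).

Definition window_seq k s t : seq bool := [seq s (t + j%:Z) | j <- iota 0 k].

Lemma val_window m s t : val (window m s t) = window_seq m s t.
Proof. exact: val_mktuple_nat. Qed.

Lemma size_window_seq k s t : size (window_seq k s t) = k.
Proof. by rewrite size_map size_iota. Qed.

Lemma nth_window_seq k s t j : (j < k)%N -> nth false (window_seq k s t) j = s (t + j%:Z).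
Proof. by move=> lt_j; rewrite (nth_map 0%N) ?size_iota // nth_iota. Qed.

Lemma window_seqS k s t : window_seq k.+1 s t = rcons (window_seq k s t) (s (t + k%:Z)).
Proof. by rewrite /window_seq -addn1 iotaD map_cat cats1. Qed.

Lemma lbit_window_seq k s t : lbit k (window_seq k.+1 s t) = window_seq k s (t + 1).
Proof.
rewrite /lbit size_window_seq subSnn /= drop0 (iotaDl 1 0 k) -map_comp.
by apply/eq_map => j /=; rewrite PoszD addrA.
Qed.

Lemma window_shift m s s' d t : (forall t, s' t = s (t + d)) ->
  window m s' t = window m s (t + d).
Proof.
by move=> s'E; apply: val_inj; rewrite !val_window; apply/eq_map => j; rewrite s'E addrAC.
Qed.

End Windows.

Section FSR.

Variables (m : nat) (f : m.-tuple bool -> bool).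
Implicit Types (s : int -> bool) (a b d t : int).

Lemma nth_fsr_step x j : (j < m)%N -> nth false (val (fsr_step f x)) j = nth (f x) (val x) j.+1.
Proof.
move=> lt_j; rewrite (val_mktuple_nat m (fun i => nth (f x) x i.+1)).
by rewrite (nth_map 0%N) ?size_iota // nth_iota.
Qed.

Lemma fsr_step_window s t : generates f s -> fsr_step f (window m s t) = window m s (t + 1).
Proof.
move=> gen; apply: val_inj; apply: (@eq_from_nth _ false) => [|j].
  by rewrite !size_tuple.
rewrite size_tuple => lt_j; rewrite nth_fsr_step // !val_window (nth_window_seq _ _ lt_j).
case: (ltnP j.+1 m) => [lt_j1 | le_mj1].
  by rewrite (set_nth_default false) ?size_window_seq // nth_window_seq // intS addrA.
have mE : m = j.+1 by apply/eqP; rewrite eqn_leq le_mj1 lt_j.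
by rewrite nth_default ?size_window_seq // -gen mE intS addrA.
Qed.

Lemma generates_shift s s' d : (forall t, s' t = s (t + d)) -> generates f s -> generates f s'.
Proof. by move=> s'E gen t; rewrite (window_shift _ _ s'E) -gen !s'E addrAC. Qed.

Lemma generates_periodic s p : (0 < p)%N -> is_period s p ->
  (forall n : nat, s (n%:Z + m%:Z) = f (window m s n%:Z)) -> generates f s.
Proof.
move=> p0 sp gen_nat t; set z := (t %/ p%:Z)%Z.
have sE x : s x = s (x + z * p%:Z) by rewrite periodMz.
have tE : t = (absz (t %% p%:Z)%Z)%:Z + z * p%:Z by rewrite absz_modz // addrC -divz_eq.
by rewrite tE addrAC -sE -(window_shift _ _ sE) gen_nat.
Qed.

Lemma generates_window_iter s1 s2 a b : generates f s1 -> generates f s2 ->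
  window m s1 a = window m s2 b -> forall n : nat, window m s1 (a + n%:Z) = window m s2 (b + n%:Z).
Proof.
move=> gen1 gen2 eq12; elim=> [|n IH]; first by rewrite !addr0.
by rewrite -addn1 PoszD !addrA -!fsr_step_window // IH.
Qed.

Lemma generates_agree s1 s2 p1 p2 a b : (0 < m)%N ->
  (0 < p1)%N -> (0 < p2)%N -> is_period s1 p1 -> is_period s2 p2 ->
  generates f s1 -> generates f s2 ->
  window m s1 a = window m s2 b -> forall t, s1 (a + t) = s2 (b + t).
Proof.
move=> m0 p10 p20 s1p s2p gen1 gen2 eq12.
apply: (periodic_agree_fwd p10 p20 s1p s2p) => n.
have := congr1 val (generates_window_iter gen1 gen2 eq12 n).
by rewrite !val_window => /(congr1 (nth false ^~ 0%N)); rewrite !nth_window_seq // !addr0.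
Qed.

Lemma in_Omega_generates c : is_cycle c -> in_Omega f c <-> generates f (cycle_seq c).
Proof.
move=> cc; split=> [[s [p [gen [lp sc]]]] | gen].
  have [d cE] := (same_cycle_shift (is_cycle_word lp) cc).1 sc.
  apply: (generates_shift (d := d)) gen => t.
  by case: lp => p0 [sp _]; rewrite cE -cycle_seq_word.
exists (cycle_seq c), (size c); split=> //; split.
  exact: least_period_cycle_seq.
by rewrite cycle_word_seq; apply: same_cycle_refl; case/andP: cc.
Qed.

Lemma fsr_orbit_seq x : (0 < m)%N -> injective (fsr_step f) ->
  exists2 w, (0 < size w)%N & generates f (cycle_seq w) /\ window m (cycle_seq w) 0 = x.
Proof.
move=> m0 injF; set F := fsr_step f; set N := order F x.
have N0 : (0 < N)%N by exact: order_gt0.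
pose u n := nth false (val (iter n F x)) 0.
have iterN k : iter (k * N) F x = x.
  by elim: k => [|k IH]; rewrite ?mulSn ?iterD ?IH ?(iter_order injF).
have iter_mod n : iter (n %% N) F x = iter n F x.
  by rewrite [in RHS](divn_eq n N) addnC iterD iterN.
have nth_iter n j : (j < m)%N -> nth false (val (iter n F x)) j = u (n + j)%N.
  elim: j n => [|j IH] n lt_j; first by rewrite addn0.
  have lt_jm := ltnW lt_j.
  rewrite -addSnnS -IH // iterS nth_fsr_step //.
  by rewrite (set_nth_default false) // size_tuple.
pose w := mkseq u N.
have wE n : cycle_seq w n%:Z = u n.
  by rewrite cycle_seq_nat size_mkseq nth_mkseq ?ltn_pmod // /u iter_mod.
have win n : window m (cycle_seq w) n%:Z = iter n F x.
  apply: val_inj; apply: (@eq_from_nth _ false) => [|j]; rewrite !size_tuple // => lt_j.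
  by rewrite val_window nth_window_seq // -PoszD wE nth_iter.
exists w; first by rewrite size_mkseq.
split; last exact: (win 0%N).
apply: (generates_periodic N0); first by have := cycle_seq_period w; rewrite size_mkseq.
move=> n; rewrite -PoszD wE win.
have -> : (n + m = n.+1 + m.-1)%N by lia.
rewrite -nth_iter ?ltn_predL // iterS nth_fsr_step ?ltn_predL // prednK //.
by rewrite nth_default // size_tuple.
Qed.

End FSR.

Section CycleSets.

Implicit Types (C : seq (seq bool)) (c u v : seq bool).

Definition windows k C : seq (seq bool) := flatten [seq Omega_k k c | c <- C].

Lemma Omega_kE k c :
  Omega_k k c = [seq window_seq k (cycle_seq c) i%:Z | i <- iota 0 (size c)].
Proof. by apply/eq_map => i; apply/eq_map => j; rewrite -PoszD cycle_seq_nat. Qed.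

Lemma size_windows k C : size (windows k C) = (\sum_(c <- C) per c)%N.
Proof.
rewrite size_flatten /shape -map_comp sumnE big_map; apply: eq_bigr => c _.
by rewrite /= Omega_kE size_map size_iota.
Qed.

Lemma mem_windows k C c t : c \in C -> (0 < size c)%N ->
  window_seq k (cycle_seq c) t \in windows k C.
Proof.
move=> cC c0; apply/flatten_mapP; exists c => //; rewrite Omega_kE.
have -> : window_seq k (cycle_seq c) t =
          window_seq k (cycle_seq c) (absz (t %% (size c)%:Z)%Z)%:Z.
  by apply/eq_map => j; apply: cycle_seq_mod; rewrite absz_modz // modzDml.
by apply: map_f; rewrite mem_iota absz_modz_lt.
Qed.

Lemma windowsP k C v : v \in windows k C ->
  exists2 c, c \in C & exists2 i, (i < size c)%N & v = window_seq k (cycle_seq c) i%:Z.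
Proof.
case/flatten_mapP => c cC; rewrite Omega_kE => /mapP[i]; rewrite mem_iota => /andP[_ lt_i] ->.
by exists c => //; exists i.
Qed.

Lemma cycle_set_same C u v : cycle_set C -> u \in C -> v \in C -> same_cycle u v -> u = v.
Proof.
case=> _ distinct uC vC; rewrite -(nth_index [::] uC) -(nth_index [::] vC) => uv.
by rewrite (distinct _ _ _ _ uv) // index_mem.
Qed.

Lemma cycle_set_uniq C : cycle_set C -> uniq C.
Proof.
move=> [cycC distinct]; apply/(uniqP [::]) => i j lt_i lt_j eq_ij.
apply: distinct => //; rewrite eq_ij same_cycle_refl //.
by have /andP[] := allP cycC _ (mem_nth [::] lt_j).
Qed.

Definition windows_determine k C := {in C &, forall c1 c2 a b,
  window_seq k (cycle_seq c1) a = window_seq k (cycle_seq c2) b ->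
  forall t, cycle_seq c1 (a + t) = cycle_seq c2 (b + t)}.

Lemma uniq_windows k C : cycle_set C -> windows_determine k C -> uniq (windows k C).
Proof.
move=> setC det; rewrite /windows (eq_map (Omega_kE k)).
apply: allpairs_uniq_dep; [exact: cycle_set_uniq | by move=> c _; exact: iota_uniq |].
move=> _ _ /allpairsPdep[c1 [i1 [c1C i1c ->]]] /allpairsPdep[c2 [i2 [c2C i2c ->]]] /= eqw.
have cyc1 : is_cycle c1 by apply: (allP setC.1).
have cyc2 : is_cycle c2 by apply: (allP setC.1).
have agree := det _ _ c1C c2C _ _ eqw.
have c12 := cycle_set_same setC c1C c2C (same_cycle_agree cyc1 cyc2 agree).
subst c2; move: i1c i2c; rewrite !mem_iota => /andP[_ i1c] /andP[_ i2c].
by rewrite (cycle_seq_shift_inj cyc1 i1c i2c agree).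
Qed.

Lemma all_size_windows k C : all (fun w => size w == k) (windows k C).
Proof. by apply/allP => _ /windowsP[c _ [i _ ->]]; rewrite size_window_seq. Qed.

End CycleSets.

Lemma uniq_words_cover (T : finType) m (s : seq (seq T)) :
  uniq s -> all (fun w => size w == m) s ->
  (forall x : m.-tuple T, val x \in s) <-> size s = (#|T| ^ m)%N.
Proof.
move=> uniq_s /allP size_s; set A := [seq val x | x : m.-tuple T].
have uniqA : uniq A by rewrite map_inj_uniq ?enum_uniq //; exact: val_inj.
have sizeA : size A = (#|T| ^ m)%N by rewrite size_map -cardE card_tuple.
have sA : {subset s <= A}.
  by move=> w /size_s /eqP wm; apply/mapP; exists (Tuple (introT eqP wm)); rewrite ?mem_enum.
split=> [cover | sizeE].
  rewrite -sizeA; apply/eqP; rewrite eqn_leq uniq_leq_size //.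
  by rewrite uniq_leq_size // => _ /mapP[x _ ->].
have [_ sAE] := uniq_min_size uniq_s sA (eq_leq (etrans sizeA (esym sizeE))).
by move=> x; rewrite sAE; apply: map_f; rewrite mem_enum.
Qed.

Section Necessity.

Variables (C : seq (seq bool)) (m : nat) (f : m.-tuple bool -> bool).
Hypotheses (setC : cycle_set C) (m_gt0 : (0 < m)%N).
Hypotheses (nonsing_f : nonsingular f) (OmegaC : Omega_eq f C).

Let cycC c : c \in C -> is_cycle c. Proof. exact: (allP setC.1). Qed.
Let injF : injective (fsr_step f). Proof. exact: bij_inj. Qed.

Lemma generates_cycles c : c \in C -> generates f (cycle_seq c).
Proof.
move=> cC; apply/in_Omega_generates/OmegaC; rewrite ?cycC //.
by apply/hasP; exists c => //; apply: same_cycle_refl; case/andP: (cycC cC).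
Qed.

Lemma nonsingular_windows_determine : windows_determine m C.
Proof.
move=> c1 c2 c1C c2C a b eqw; have [/andP[c10 _] /andP[c20 _]] := (cycC c1C, cycC c2C).
apply: (generates_agree m_gt0 c10 c20 (cycle_seq_period _) (cycle_seq_period _)
  (generates_cycles c1C) (generates_cycles c2C)).
by apply: val_inj; rewrite !val_window.
Qed.

Lemma nonsingular_windows_cover (x : m.-tuple bool) : val x \in windows m C.
Proof.
have [w w0 [gen_w xE]] := fsr_orbit_seq x m_gt0 injF.
have [q lq] := exists_least_period w0 (cycle_seq_period w).
set c0 := cycle_word (cycle_seq w) q; have cyc0 : is_cycle c0 := is_cycle_word lq.
have c0E t : cycle_seq c0 t = cycle_seq w (t + 0).
  by case: lq => q0 [wq _]; rewrite addr0 -cycle_seq_word.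
have : in_Omega f c0 by apply/in_Omega_generates => //; exact: generates_shift c0E gen_w.
case/(OmegaC cyc0)/hasP => c cC /(same_cycle_shift cyc0 (cycC cC)) [d cE].
have -> : x = window m (cycle_seq c) (- d).
  by rewrite (window_shift _ _ cE) addNr (window_shift _ _ c0E) addr0.
by rewrite val_window mem_windows //; case/andP: (cycC cC).
Qed.

Lemma nonsingular_sum_per : (\sum_(c <- C) per c)%N = (2 ^ m)%N.
Proof.
rewrite -(size_windows m) -card_bool.
apply/uniq_words_cover; last exact: nonsingular_windows_cover.
  exact: uniq_windows setC nonsingular_windows_determine.
exact: all_size_windows.
Qed.

Lemma nonsingular_lbit_inj : {in windows m.+1 C &, injective (lbit m)}.
Proof.
move=> _ _ /windowsP[c1 c1C [i1 _ ->]] /windowsP[c2 c2C [i2 _ ->]].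
rewrite !lbit_window_seq => eq1.
have eq0 : window m (cycle_seq c1) i1%:Z = window m (cycle_seq c2) i2%:Z.
  have [gen1 gen2] := (generates_cycles c1C, generates_cycles c2C).
  apply: injF; rewrite !fsr_step_window //.
  by apply: val_inj; rewrite !val_window.
have := congr1 val eq0; rewrite !val_window => eqw.
by rewrite !window_seqS eqw (generates_cycles c1C) (generates_cycles c2C) eq0.
Qed.

End Necessity.

Section Sufficiency.

Variables (C : seq (seq bool)) (m : nat).
Hypotheses (setC : cycle_set C) (m_gt0 : (0 < m)%N).
Hypotheses (sumC : (\sum_(c <- C) per c)%N = (2 ^ m)%N).
Hypothesis lbit_inj : {in windows m.+1 C &, injective (lbit m)}.

Let cycC c : c \in C -> is_cycle c. Proof. exact: (allP setC.1). Qed.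
Let sizeC c : c \in C -> (0 < size c)%N. Proof. by case/cycC/andP. Qed.

Lemma lbit_inj_windows_determine : windows_determine m C.
Proof.
have back c1 c2 x y : c1 \in C -> c2 \in C ->
    window_seq m (cycle_seq c1) (x + 1) = window_seq m (cycle_seq c2) (y + 1) ->
    window_seq m (cycle_seq c1) x = window_seq m (cycle_seq c2) y.
  move=> c1C c2C eqw; suff : window_seq m.+1 (cycle_seq c1) x = window_seq m.+1 (cycle_seq c2) y.
    by rewrite !window_seqS => /rcons_inj[].
  by apply: lbit_inj; rewrite ?mem_windows ?sizeC // !lbit_window_seq.
move=> c1 c2 c1C c2C a b eqw.
apply: (periodic_agree_bwd (sizeC c1C) (sizeC c2C) (cycle_seq_period _) (cycle_seq_period _)).
move=> n; suff : window_seq m (cycle_seq c1) (a - n%:Z) = window_seq m (cycle_seq c2) (b - n%:Z).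
  by move/(congr1 (nth false ^~ 0%N)); rewrite !nth_window_seq // !addr0.
elim: n => [|n IH]; first by rewrite !subr0.
have predE x : x - n.+1%:Z + 1 = x - n%:Z by lia.
by apply: back; rewrite ?predE.
Qed.

Lemma lbit_inj_windows_cover (x : m.-tuple bool) :
  exists2 c, c \in C & exists i : nat, x = window m (cycle_seq c) i%:Z.
Proof.
have : val x \in windows m C.
  move: x; apply/uniq_words_cover; rewrite ?all_size_windows ?size_windows ?card_bool //.
  exact: uniq_windows setC lbit_inj_windows_determine.
case/windowsP => c cC [i _ xE]; exists c => //; exists i.
by apply: val_inj; rewrite val_window.
Qed.

Definition cycles_fsr (x : m.-tuple bool) : bool := rcons (val x) true \in windows m.+1 C.

Lemma cycles_fsr_window c t : c \in C ->
  cycles_fsr (window m (cycle_seq c) t) = cycle_seq c (t + m%:Z).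
Proof.
move=> cC; rewrite /cycles_fsr val_window.
case E: (cycle_seq c (t + m%:Z)); first by rewrite -E -window_seqS mem_windows ?sizeC.
apply/negP => /windowsP[c' c'C [i _]]; rewrite window_seqS => /rcons_inj[eqw E'].
by have := lbit_inj_windows_determine c'C cC (esym eqw) m%:Z; rewrite -E' E.
Qed.

Lemma cycles_fsr_generates c : c \in C -> generates cycles_fsr (cycle_seq c).
Proof. by move=> cC t; rewrite cycles_fsr_window. Qed.

Lemma cycles_fsr_nonsingular : nonsingular cycles_fsr.
Proof.
apply: injF_bij => x y.
have [c1 c1C [i1 ->]] := lbit_inj_windows_cover x.
have [c2 c2C [i2 ->]] := lbit_inj_windows_cover y.
have [gen1 gen2] := (cycles_fsr_generates c1C, cycles_fsr_generates c2C).
rewrite !fsr_step_window // => eqF.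
have := congr1 val eqF; rewrite !val_window => eqw.
have agree := lbit_inj_windows_determine c1C c2C eqw.
apply: val_inj; rewrite !val_window; apply/eq_map => j.
have shiftE z : z + 1 + (j%:Z - 1) = z + j%:Z by lia.
by have := agree (j%:Z - 1); rewrite !shiftE.
Qed.

Lemma cycles_fsr_Omega : Omega_eq cycles_fsr C.
Proof.
move=> c cc; rewrite in_Omega_generates //; split=> [gen | /hasP[c' c'C]].
  have [c' c'C [i w0]] := lbit_inj_windows_cover (window m (cycle_seq c) 0).
  have c0 : (0 < size c)%N by case/andP: cc.
  have := generates_agree m_gt0 c0 (sizeC c'C) (cycle_seq_period _) (cycle_seq_period _)
    gen (cycles_fsr_generates c'C) w0.
  by move/(same_cycle_agree cc (cycC c'C)) => cc'; apply/hasP; exists c'.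
case/(same_cycle_shift cc (cycC c'C)) => d c'E.
by apply: (generates_shift (d := - d)) (cycles_fsr_generates c'C) => t; rewrite c'E subrK.
Qed.

End Sufficiency.

Local Close Scope ring_scope.
Unset Implicit Arguments.
Theorem lemma4 (C : seq (seq bool)) (m : nat) :
  cycle_set C -> (1 <= m)%N ->
  ((exists f : m.-tuple bool -> bool, nonsingular f /\ Omega_eq f C) <->
   ((\sum_(c <- C) per c)%N = 2 ^ m /\
    {in flatten [seq Omega_k m.+1 c | c <- C] &, injective (lbit m)})).
Proof.
move=> setC m_gt0; split=> [[f [nonsing_f OmegaC]] | [sumC lbit_inj]].
  split; first exact: (nonsingular_sum_per setC m_gt0 nonsing_f OmegaC).
  exact: (nonsingular_lbit_inj setC nonsing_f OmegaC).
exists (cycles_fsr C (m := m)); split.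
  exact: (cycles_fsr_nonsingular setC m_gt0 sumC lbit_inj).
exact: (cycles_fsr_Omega setC m_gt0 sumC lbit_inj).
Qed.
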